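(* For each $n$ let $\mathcal{C},\mathcal{C}'$ be conjugacy classes of $S_n$ whose elements have $c_j$ (resp. $c'_j$) $j$-cycles, with total cycle counts $c=\sum_j c_j$ and $c'=\sum_j c'_j$. Let $\pi\in\mathcal{C}$, $\pi'\in\mathcal{C}'$ be independent and uniform, and let $N_k$ be the number of orbits of size $k$ of $\langle\pi,\pi'\rangle$ on $\{1,\dots,n\}$. Assume $c_1+c'_1=o(n)$ and that there is a constant $\delta>0$ with $c+c'\leq(1-\delta)n$. Then there are a constant $\eta>0$ and a function $g(n)=o(n)$ such that for all $1\leq k\leq n/2$, \[ \mathbf{E} N_k \leq e^{-\eta k + g(n)}. \]
   Context: Asymptotic notation is with respect to $n\to\infty$. *)

From HB Require Import structures.
From mathcomp Require Import all_boot all_order all_algebra all_fingroup.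
From mathcomp Require Import reals sequences exp.
Set Implicit Arguments. Unset Strict Implicit. Unset Printing Implicit Defensive.
Import Order.TTheory GRing.Theory Num.Theory.

Definition cycle_count (T : finType) (s : {perm T}) (j : nat) : nat :=
  #|[set O in porbits s | #|O| == j]|.

Definition total_cycles (T : finType) (s : {perm T}) : nat := #|porbits s|.

Definition conj_class (T : finType) (s : {perm T}) : {set {perm T}} :=
  (s ^: [set: {perm T}])%g.

Definition N_orbits (T : finType) (p q : {perm T}) (k : nat) : nat :=
  #|[set O in (orbit 'P <<[set p; q]>>%g) @: [set: T] | #|O| == k]|.

Local Open Scope ring_scope.

Definition EN (R : realType) (T : finType) (s t : {perm T}) (k : nat) : R :=
  (\sum_(p in conj_class s) \sum_(q in conj_class t) (N_orbits p q k)%:R)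
  / (#|conj_class s| * #|conj_class t|)%:R.

Definition little_o_n (R : realType) (f : nat -> R) : Prop :=
  forall eps : R, 0 < eps -> exists N : nat, forall n : nat, (N <= n)%N ->
    `|f n| <= eps * n%:R.

From HB Require Import structures.
From mathcomp Require Import all_boot all_order all_algebra all_fingroup.
From mathcomp Require Import primitive_action alt.
From mathcomp Require Import reals sequences exp.
From mathcomp Require Import zify ring lra.
Import Order.TTheory GRing.Theory Num.Theory.
Set Implicit Arguments. Unset Strict Implicit. Unset Printing Implicit Defensive.

(* An orbit of size k of <pi, pi'> is a k-set stable under both permutations,
   and for pi uniform in a conjugacy class the probability that a given k-set
   is pi-stable does not depend on the set.  Hence
   E N_k <= I_k(s) I_k(t) / C(n, k), where I_k(s) counts the s-stable k-sets.
   A stable set is the union of the cycles it contains, at most k/2 of which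
   are not fixed points, so for 0 <= x <= 1 the generating function over cycles
   gives I_k(s) I_k(t) x^k <= 2^(c_1 + c'_1) (1 + x)^(c + c').  Taking
   x = k/(n-k) and bounding C(n, k) from below by the largest term of
   ((n-k) + k)^n yields E N_k <= (n+1) 2^(c_1 + c'_1) (1 - k/n)^(n - c - c'),
   which is exp(-delta k + o(n)) since n - c - c' >= delta n. *)

Section StableSets.
Variable T : finType.
Implicit Types (p q s t sg : {perm T}) (S : {set T}).

Definition perm_stable p S := [forall x in S, p x \in S].

Definition stable_ksets p k := [set S : {set T} | (#|S| == k) && perm_stable p S].

Definition class_stabilizers (C : {set {perm T}}) S := [set p in C | perm_stable p S].

Lemma perm_stable_orbit (G : {group {perm T}}) p z :
  p \in G -> perm_stable p (orbit 'P G z).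
Proof.
move=> pG; apply/forall_inP => y yGz.
exact: orbit_trans (mem_orbit 'P y pG) yGz.
Qed.

Lemma N_orbits_le_common_stable p q k :
  N_orbits p q k <= #|stable_ksets p k :&: stable_ksets q k|.
Proof.
apply: subset_leq_card; apply/subsetP => O.
rewrite !inE => /andP[/imsetP[z _ ->] ->] /=.
by rewrite !perm_stable_orbit // mem_gen // !inE eqxx ?orbT.
Qed.

Lemma perm_stableJ p sg S : perm_stable p S -> perm_stable (p ^ sg)%g (sg @: S).
Proof.
move=> /forall_inP pS; apply/forall_inP => _ /imsetP[z zS ->].
by rewrite permJ imset_f ?pS.
Qed.

Lemma perm_stable_imsetV p sg S : perm_stable (p ^ sg)%g S = perm_stable p (sg^-1%g @: S).
Proof.
apply/idP/idP => [/(perm_stableJ sg^-1%g)|/(perm_stableJ sg)]; first by rewrite conjgK.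
by rewrite -imset_comp (eq_imset _ (permKV sg)) imset_id.
Qed.

Lemma card_stable_ksetsJ p sg k : #|stable_ksets (p ^ sg)%g k| = #|stable_ksets p k|.
Proof.
rewrite -[RHS](card_preimset _ (imset_inj (@perm_inj _ sg^-1%g))).
by apply: eq_card => S; rewrite !inE card_imset ?perm_stable_imsetV //; apply: perm_inj.
Qed.

Lemma perm_imset_eq_card S S' : #|S| = #|S'| -> exists sg, sg @: S = S'.
Proof.
move=> eqSS'.
(* Sym_T is #|T|-transitive on tuples of distinct elements: send an
   enumeration of S to one of S'. *)
have dtupleT m (t : m.-tuple T) : uniq t -> t \in m.-dtuple(setT).
  by move=> ut; rewrite inE ut; apply/subsetP => x; rewrite inE.
have /atransP orbS := ntransitive_weak (max_card S) (Sym_trans T).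
have := dtupleT _ (tcast (esym eqSS') [tuple of enum S']).
rewrite -(orbS _ (dtupleT _ [tuple of enum S] (enum_uniq _))) val_tcast enum_uniq.
case/(_ isT)/orbitP => sg _ /(congr1 (@tval _ _)); rewrite val_tcast /= => mapS.
exists sg; apply/setP => x; rewrite -[x \in S']mem_enum -mapS.
by apply/imsetP/mapP => -[y yS ->]; exists y; rewrite ?mem_enum in yS *.
Qed.

Lemma conj_classJ s p sg : p \in conj_class s -> (p ^ sg)%g \in conj_class s.
Proof. by case/imsetP => tau _ ->; rewrite -conjgM memJ_class ?inE. Qed.

Lemma card_class_stabilizers_imset s sg S :
  #|class_stabilizers (conj_class s) S| <= #|class_stabilizers (conj_class s) (sg @: S)|.
Proof.
rewrite -(card_imset _ (conjg_inj sg)); apply/subset_leq_card/subsetP => _ /imsetP[p + ->].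
by rewrite !inE => /andP[ps pS]; rewrite conj_classJ ?perm_stableJ.
Qed.

Lemma card_class_stabilizers_eq s S S' : #|S| = #|S'| ->
  #|class_stabilizers (conj_class s) S| = #|class_stabilizers (conj_class s) S'|.
Proof.
move=> eqSS'; have [sg e] := perm_imset_eq_card eqSS'.
have [sg' e'] := perm_imset_eq_card (esym eqSS').
by apply/eqP; rewrite eqn_leq -{1}e -{3}e' !card_class_stabilizers_imset.
Qed.

Lemma card_class_stabilizersE C S :
  #|class_stabilizers C S| = \sum_(p in C) perm_stable p S.
Proof. by rewrite -sum1dep_card big_mkcondr; apply: eq_bigr => p _; case: perm_stable. Qed.

Lemma card_stable_ksetsE p k :
  #|stable_ksets p k| = \sum_(S : {set T} | #|S| == k) perm_stable p S.
Proof. by rewrite -sum1dep_card big_mkcondr; apply: eq_bigr => S _; case: perm_stable. Qed.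

Lemma card_stable_ksetsI p q k : #|stable_ksets p k :&: stable_ksets q k| =
  \sum_(S : {set T} | #|S| == k) perm_stable p S * perm_stable q S.
Proof.
rewrite -sum1_card [LHS]big_mkcond [RHS]big_mkcond; apply: eq_bigr => S _.
by rewrite !inE; case: (_ == _); case: perm_stable; case: perm_stable.
Qed.

Lemma sum_card_class_stabilizers s k :
  \sum_(S : {set T} | #|S| == k) #|class_stabilizers (conj_class s) S| =
  #|conj_class s| * #|stable_ksets s k|.
Proof.
under eq_bigr do rewrite card_class_stabilizersE.
rewrite exchange_big /= -sum_nat_const; apply: eq_bigr => p /imsetP[sg _ ->].
by rewrite -card_stable_ksetsE card_stable_ksetsJ.
Qed.

Lemma card_class_stabilizers s S :
  'C(#|T|, #|S|) * #|class_stabilizers (conj_class s) S| =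
  #|conj_class s| * #|stable_ksets s #|S| |.
Proof.
rewrite -sum_card_class_stabilizers -card_draws -sum_nat_cond_const.
by apply: eq_bigr => S' /eqP/esym/card_class_stabilizers_eq.
Qed.

Lemma sum_card_stable_ksetsI s t k :
  \sum_(p in conj_class s) \sum_(q in conj_class t)
     #|stable_ksets p k :&: stable_ksets q k| =
  \sum_(S : {set T} | #|S| == k)
     #|class_stabilizers (conj_class s) S| * #|class_stabilizers (conj_class t) S|.
Proof.
under [RHS]eq_bigr do rewrite !card_class_stabilizersE big_distrl /=.
rewrite [RHS]exchange_big; apply: eq_bigr => p _.
under [RHS]eq_bigr do rewrite big_distrr /=.
by rewrite [RHS]exchange_big; apply: eq_bigr => q _; rewrite card_stable_ksetsI.
Qed.

Lemma sum_N_orbits_le s t k :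
  (\sum_(p in conj_class s) \sum_(q in conj_class t) N_orbits p q k) * 'C(#|T|, k) <=
  #|conj_class s| * #|stable_ksets s k| * (#|conj_class t| * #|stable_ksets t k|).
Proof.
have sumN_le : \sum_(p in conj_class s) \sum_(q in conj_class t) N_orbits p q k <=
    \sum_(p in conj_class s) \sum_(q in conj_class t)
      #|stable_ksets p k :&: stable_ksets q k|.
  by do 2![apply: leq_sum => ? _]; apply: N_orbits_le_common_stable.
apply: leq_trans (leq_mul sumN_le (leqnn _)) _.
rewrite sum_card_stable_ksetsI big_distrl -sum_card_class_stabilizers big_distrl /=.
apply/eq_leq/eq_bigr => S /eqP <-.
by rewrite -mulnA [_ * 'C(_, _)]mulnC card_class_stabilizers.
Qed.

End StableSets.

Section BinomialMaxTerm.
Variables a b : nat.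
Hypothesis a_gt0 : 0 < a.
Local Notation n := (a + b).
Local Notation term i := ('C(n, i) * (a ^ (n - i) * b ^ i)).

Lemma binomial_term_ratio i :
  i < n -> term i.+1 * (i.+1 * a) = term i * (b * (n - i)).
Proof.
move=> lt_i_n; have eA : a ^ (n - i) = a ^ (n - i.+1) * a by rewrite -expnSr subnSK.
rewrite eA expnSr.
transitivity (i.+1 * 'C(n, i.+1) * (a ^ (n - i.+1) * a * (b ^ i * b))); first ring.
by rewrite mul_bin_left; ring.
Qed.

Lemma binomial_term_le_max i : term i <= term b.
Proof.
have ia_gt0 j : 0 < j.+1 * a by rewrite muln_gt0.
case: (leqP i b) => [le_ib | /ltnW le_bi].
  apply: (@homo_leq_in _ [pred j | j <= b] (fun j => term j) leq
    _ _ _ _ i b le_ib (leqnn b) le_ib) => //.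
  - exact: leq_trans.
  - by move=> x y _ yb z /andP[_ /ltnW /leq_trans]; apply.
  move=> j _ /[!inE] lt_jb; rewrite -(leq_pmul2r (ia_gt0 j)) binomial_term_ratio; last by lia.
  by apply: leq_mul => //; apply: leq_mul; lia.
apply: (@homo_leq_in _ [pred j | b <= j] (fun j => term j) (fun x y => y <= x)
  _ _ _ _ b i (leqnn b) le_bi le_bi) => //.
- by move=> y x z le_yx le_zy; apply: leq_trans le_zy le_yx.
- by move=> x y xb _ z /andP[/ltnW le_xz _]; apply: leq_trans le_xz.
move=> j /[!inE] le_bj _; case: (ltnP j n) => [lt_jn | le_nj]; last first.
  by rewrite bin_small ?ltnS.
rewrite -(leq_pmul2r (ia_gt0 j)) binomial_term_ratio //.
by apply: leq_mul => //; apply: leq_mul; lia.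
Qed.

Lemma expn_le_binomial_max_term : n ^ n <= n.+1 * ('C(n, b) * (a ^ a * b ^ b)).
Proof.
apply: (@leq_trans (\sum_(i < n.+1) term b)).
  by rewrite expnDn; apply: leq_sum => i _; apply: binomial_term_le_max.
by rewrite sum_nat_const card_ord addnK.
Qed.

End BinomialMaxTerm.

Local Open Scope ring_scope.

Lemma sum_set_prod (R : comPzSemiRingType) (I : finType) (w : I -> R) :
  \sum_(A : {set I}) \prod_(i in A) w i = \prod_(i : I) (1 + w i).
Proof.
rewrite (eq_bigr (fun i => \sum_(b : bool) (if b then w i else 1))); last first.
  by move=> i _; rewrite big_bool /= addrC.
rewrite bigA_distr_bigA /= (reindex (fun f : {ffun I -> bool} => [set i | f i])) /=.
  by apply: eq_bigr => f _; rewrite big_mkcond /=; apply: eq_bigr => i _; rewrite inE.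
apply: onW_bij; exists (fun A : {set I} => [ffun i => i \in A]).
  by move=> f; apply/ffunP => i; rewrite ffunE inE.
by move=> A; apply/setP => i; rewrite inE ffunE.
Qed.

Section CycleWeights.
Variable T : finType.
Implicit Types (s t : {perm T}) (S : {set T}).

Lemma trivIset_porbits s : trivIset (porbits s).
Proof.
apply/trivIsetP => _ _ /imsetP[x _ ->] /imsetP[y _ ->] nxy.
rewrite -setI_eq0; apply: contraNT nxy => /set0Pn[z /setIP[zx zy]].
by rewrite -eq_porbit_mem in zx; rewrite -(eqP zx) eq_porbit_mem.
Qed.

Definition nontrivial_cycles_in s S :=
  #|[set O in porbits s | (O \subset S) && (#|O| != 1%N)]|.

Lemma nontrivial_cycles_in_le s S : ((nontrivial_cycles_in s S).*2 <= #|S|)%N.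
Proof.
set A := [set O in porbits s | O \subset S].
have tA : trivIset A.
  by apply: trivIsetS (trivIset_porbits s); apply/subsetP => O; rewrite inE => /andP[].
have coverA : cover A \subset S by apply/bigcupsP => O; rewrite inE => /andP[].
apply: leq_trans (subset_leq_card coverA); rewrite -(eqP tA).
rewrite /nontrivial_cycles_in -sum1dep_card -muln2 big_distrl /=.
rewrite big_mkcond [X in (_ <= X)%N]big_mkcond; apply: leq_sum => O _; rewrite !inE.
case: (boolP (O \in porbits s)) => //= /imsetP[x _ ->]; case: (_ \subset _) => //=.
by have := card_porbit_neq0 s x; case: #|porbit s x| => [|[|m]].
Qed.

Lemma cover_cycles_in_stable s S :
  perm_stable s S -> cover [set O in porbits s | O \subset S] = S.
Proof.
move=> /forall_inP sS; apply/setP => x; apply/bigcupP/idP => [[O] | xS].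
  by rewrite inE => /andP[_ /subsetP OS] /OS.
exists (porbit s x); last exact: porbit_id.
rewrite inE imset_f //=; apply/subsetP => y /porbitP[i ->].
by elim: i => [|i IHi]; rewrite ?expg0 ?perm1 // expgSr permM sS.
Qed.

Lemma sum_stable_ksets_weight_le (R : numDomainType) s k (x : R) : 0 <= x ->
  \sum_(S in stable_ksets s k) x ^+ nontrivial_cycles_in s S <=
  2 ^+ cycle_count s 1 * (1 + x) ^+ total_cycles s.
Proof.
move=> x0.
pose w O : R := if O \in porbits s then (if #|O| == 1%N then 1 else x) else 0.
have w0 O : 0 <= w O by rewrite /w; case: ifP => //; case: ifP.
pose cycles_in S := [set O in porbits s | O \subset S].
have weightE S : x ^+ nontrivial_cycles_in s S = \prod_(O in cycles_in S) w O.
  rewrite -prodr_const [LHS]big_mkcond [RHS]big_mkcond; apply: eq_bigr => O _.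
  by rewrite /w !inE; case: (O \in porbits s); case: (O \subset S); case: (#|O| == 1%N).
under eq_bigr do rewrite weightE.
rewrite -(big_imset (fun A : {set {set T}} => \prod_(O in A) w O)) /=; last first.
  move=> S1 S2 /[!inE] /andP[_ sS1] /andP[_ sS2] eq12.
  by rewrite -(cover_cycles_in_stable sS1) -(cover_cycles_in_stable sS2); congr cover.
apply: le_trans (_ : \sum_(A : {set {set T}}) \prod_(O in A) w O <= _).
  rewrite [leLHS]big_mkcond /=; apply: ler_sum => A _.
  by case: ifP => _ //; apply: prodr_ge0.
rewrite sum_set_prod (bigID (mem (porbits s))) /= [X in _ * X]big1 ?mulr1; last first.
  by move=> O nsO; rewrite /w (negbTE nsO) addr0.
have count1E : 2 ^+ cycle_count s 1 = \prod_(O in porbits s) (if #|O| == 1%N then 2 else 1) :> R.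
  rewrite -prodr_const [LHS]big_mkcond [RHS]big_mkcond; apply: eq_bigr => O _.
  by rewrite inE; case: (O \in porbits s).
rewrite count1E mulrC -prodr_const -big_split /=; apply: ler_prod => O sO.
rewrite addr_ge0 ?w0 //= /w sO; case: ifP => _; last by rewrite mulr1.
by rewrite mulr_natr mulr2n lerD // lerDl.
Qed.

Lemma card_stable_ksets_mul_le (R : numDomainType) s t k (x : R) : 0 <= x <= 1 ->
  (#|stable_ksets s k| * #|stable_ksets t k|)%:R * x ^+ k <=
  2 ^+ (cycle_count s 1 + cycle_count t 1) * (1 + x) ^+ (total_cycles s + total_cycles t).
Proof.
case/andP=> x0 x1.
have -> : (#|stable_ksets s k| * #|stable_ksets t k|)%:R * x ^+ k =
    \sum_(S in stable_ksets s k) \sum_(S' in stable_ksets t k) x ^+ k.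
  by rewrite natrM -mulrA !mulr_natl !sumr_const.
apply: le_trans (_ : \sum_(S in stable_ksets s k) \sum_(S' in stable_ksets t k)
    x ^+ nontrivial_cycles_in s S * x ^+ nontrivial_cycles_in t S' <= _).
  apply: ler_sum => S /[!inE] /andP[/eqP cardS _].
  apply: ler_sum => S' /[!inE] /andP[/eqP cardS' _].
  rewrite -exprD; apply: ler_wiXn2l => //.
  by have := nontrivial_cycles_in_le s S; have := nontrivial_cycles_in_le t S'; lia.
rewrite -big_distrlr /= !exprD mulrACA.
by apply: ler_pM; rewrite ?sumr_ge0 ?sum_stable_ksets_weight_le // => S _; rewrite exprn_ge0.
Qed.

End CycleWeights.

Lemma binomial_max_term_ge1 (R : realFieldType) n k : (0 < k < n)%N ->
  1 <= n.+1%:R * 'C(n, k)%:R * (k%:R / (n - k)%:R) ^+ k * ((n - k)%:R / n%:R) ^+ n :> R.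
Proof.
case/andP=> k0 kn; have nk0 : (0 < n - k)%N by rewrite subn_gt0.
have n0 : 0 < n%:R :> R by rewrite ltr0n (ltn_trans k0).
rewrite -(ler_pM2r (exprn_gt0 n n0)) mul1r -natrX.
have := @expn_le_binomial_max_term (n - k) k nk0.
rewrite (subnK (ltnW kn)) -(ler_nat R) => /le_trans; apply.
rewrite le_eqVlt; apply/predU1P; left.
have splitX : (n - k)%:R ^+ n = (n - k)%:R ^+ k * (n - k)%:R ^+ (n - k) :> R.
  by rewrite -exprD subnKC // ltnW.
rewrite !expr_div_n !natrM !natrX splitX.
by field; rewrite !expf_neq0 ?(lt0r_neq0 n0) // pnatr_eq0 -lt0n.
Qed.

Lemma expr_le_expRN (R : realType) (y : R) m : 0 <= y <= 1 ->
  (1 - y) ^+ m <= expR (- (y * m%:R)).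
Proof.
case/andP=> y0 y1; rewrite mulrC -mulrN expRM_natl.
by rewrite lerXn2r ?nnegrE ?expR_ge0 ?subr_ge0 // expR_ge1Dx.
Qed.

Section ExpectedOrbits.
Variables (R : realType) (T : finType).
Implicit Types (s t : {perm T}).

Lemma conj_class_card_gt0 s : (0 < #|conj_class s|)%N.
Proof. by apply/card_gt0P; exists s; apply: class_refl. Qed.

Lemma EN_ge0 s t k : 0 <= EN R s t k.
Proof. by rewrite /EN divr_ge0 // sumr_ge0 // => p _; rewrite sumr_ge0. Qed.

Lemma EN_mul_binomial_le s t k :
  EN R s t k * 'C(#|T|, k)%:R <= (#|stable_ksets s k| * #|stable_ksets t k|)%:R.
Proof.
rewrite /EN; under eq_bigr do rewrite -natr_sum.
rewrite -natr_sum mulrAC ler_pdivrMr ?ltr0n ?muln_gt0 ?conj_class_card_gt0 //.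
rewrite -!natrM ler_nat.
by apply: leq_trans (sum_N_orbits_le s t k) (eq_leq _); ring.
Qed.

Lemma EN_le_card s t k : EN R s t k <= #|T|%:R.
Proof.
rewrite /EN ler_pdivrMr ?ltr0n ?muln_gt0 ?conj_class_card_gt0 //.
have N_le (p q : {perm T}) : (N_orbits p q k <= #|T|)%N.
  rewrite -cardsT; apply: leq_trans (leq_imset_card (orbit 'P <<[set p; q]>>%g) _).
  by apply/subset_leq_card/subsetP => O; rewrite inE => /andP[].
rewrite mulr_natr mulnC mulrnA -2!sumr_const.
by apply: ler_sum => p _; apply: ler_sum => q _; rewrite ler_nat.
Qed.

Lemma EN_le_cycle_bound s t k :
  (0 < k)%N -> (k.*2 <= #|T|)%N -> (total_cycles s + total_cycles t <= #|T|)%N ->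
  EN R s t k <= #|T|.+1%:R * 2 ^+ (cycle_count s 1 + cycle_count t 1) *
    ((#|T| - k)%:R / #|T|%:R) ^+ (#|T| - (total_cycles s + total_cycles t)).
Proof.
move=> k0 kn cn; set n := #|T| in kn cn *.
set c := (total_cycles s + total_cycles t)%N in cn *.
set F := (cycle_count s 1 + cycle_count t 1)%N.
have lt_kn : (k < n)%N by rewrite -addnn in kn; lia.
have nk0 : 0 < (n - k)%:R :> R by rewrite ltr0n subn_gt0.
have n0 : 0 < n%:R :> R by rewrite ltr0n (ltn_trans k0).
(* 'C(n, k) x^k r^n is the largest term of the expansion of
   n^n = ((n - k) + k)^n, divided by n^n. *)
set x : R := k%:R / (n - k)%:R; set r : R := (n - k)%:R / n%:R.
have r0 : 0 < r by rewrite divr_gt0.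
have x01 : 0 <= x <= 1.
  by rewrite /x divr_ge0 ?ler0n //= ler_pdivrMr // mul1r ler_nat; lia.
have r1x : 1 + x = r^-1.
  rewrite /x /r (natrB _ (ltnW lt_kn)); field.
  by rewrite -(natrB _ (ltnW lt_kn)) !lt0r_neq0.
apply: le_trans (_ : EN R s t k * (n.+1%:R * 'C(n, k)%:R * x ^+ k * r ^+ n) <= _).
  by rewrite ler_peMr ?EN_ge0 ?binomial_max_term_ge1 ?k0.
rewrite (_ : _ * _ = n.+1%:R * r ^+ n * (EN R s t k * 'C(n, k)%:R * x ^+ k)); last by ring.
apply: le_trans (_ : n.+1%:R * r ^+ n * (2 ^+ F * (1 + x) ^+ c) <= _).
  apply: ler_wpM2l; first by rewrite mulr_ge0 ?ler0n // exprn_ge0 // ltW.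
  apply: le_trans (card_stable_ksets_mul_le s t k x01).
  by rewrite ler_wpM2r ?exprn_ge0 ?EN_mul_binomial_le //; case/andP: x01.
have splitX : r ^+ n = r ^+ (n - c) * r ^+ c by rewrite -exprD subnK.
have rc0 : r ^+ c != 0 by rewrite expf_neq0 ?lt0r_neq0.
by rewrite r1x exprVn splitX mulrACA mulfK.
Qed.

Lemma EN_le_expR s t k (d : R) :
  (0 < k)%N -> (k.*2 <= #|T|)%N -> 0 <= d ->
  (total_cycles s + total_cycles t)%:R <= (1 - d) * #|T|%:R ->
  EN R s t k <= expR (- (d * k%:R) +
    (ln #|T|.+1%:R + (cycle_count s 1 + cycle_count t 1)%:R)).
Proof.
move=> k0 kn d0 cycles_le; set n := #|T| in kn cycles_le *.
set c := (total_cycles s + total_cycles t)%N in cycles_le *.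
set F := (cycle_count s 1 + cycle_count t 1)%N.
have lt_kn : (k < n)%N by rewrite -addnn in kn; lia.
have n0 : 0 < n%:R :> R by rewrite ltr0n (ltn_trans k0).
have cn : (c <= n)%N by rewrite -(ler_nat R); nra.
have dn : d * n%:R <= (n - c)%:R by rewrite natrB //; lra.
have r_ge0 : 0 <= (n - k)%:R / n%:R :> R by rewrite divr_ge0 ?ler0n.
apply: le_trans (EN_le_cycle_bound k0 kn cn) _; rewrite -/n -/c -/F.
rewrite !expRD lnK ?posrE ?ltr0n // [leLHS]mulrC.
apply: ler_pM; rewrite ?mulr_ge0 ?exprn_ge0 ?ler0n //.
- rewrite natrB ?(ltnW lt_kn) // mulrBl divff ?lt0r_neq0 //.
  apply: le_trans (expr_le_expRN _ _) _.
    by rewrite divr_ge0 ?ler0n //= ler_pdivrMr // mul1r ler_nat ltnW.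
  rewrite ler_expR lerN2 mulrAC ler_pdivlMr //.
  by rewrite mulrAC [leRHS]mulrC ler_wpM2r ?ler0n.
- rewrite ler_pM2l ?ltr0n // -[F%:R]mulr1 expRM_natl lerXn2r ?nnegrE ?expR_ge0 //.
  exact: expR_ge1Dx.
Qed.

End ExpectedOrbits.

Section LittleO.
Variable R : realType.
Implicit Types f g : nat -> R.

Lemma little_o_nD f g : little_o_n f -> little_o_n g -> little_o_n (fun n => f n + g n).
Proof.
move=> o_f o_g eps eps0; have eps2 : 0 < eps / 2 by rewrite divr_gt0.
have [Nf hf] := o_f _ eps2; have [Ng hg] := o_g _ eps2.
exists (maxn Nf Ng) => n; rewrite geq_max => /andP[/hf fn /hg gn].
by rewrite (splitr eps) mulrDl; apply: le_trans (ler_normD _ _) (lerD fn gn).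
Qed.

Lemma little_o_n_eventually0 f N : (forall n, (N <= n)%N -> f n = 0) -> little_o_n f.
Proof. by move=> f0 eps eps0; exists N => n /f0 ->; rewrite normr0 mulr_ge0 ?ler0n // ltW. Qed.

Lemma little_o_n_ln : little_o_n (fun n => ln n.+1%:R : R).
Proof.
move=> eps eps0; have ee : 0 < eps * eps by rewrite mulr_gt0.
have b0 : 0 <= 2 / (eps * eps) by rewrite divr_ge0 // ltW.
exists (Num.Def.archi_bound (2 / (eps * eps))).+1 => n /ltnW large_n.
have n_large : 2 < eps * eps * n%:R.
  rewrite mulrC -ltr_pdivrMr //; apply: lt_le_trans (archi_boundP b0) _.
  by rewrite ler_nat.
have epsn : 0 <= eps * n%:R by rewrite mulr_ge0 ?ler0n // ltW.
have expR_ge : n.+1%:R <= expR (eps * n%:R).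
  apply: le_trans (expR_ge1Dxn 1 epsn); rewrite -addn1 natrD addrC lerD2l.
  have := ler0n R n; rewrite (_ : 2`!%:R = 2 :> R) // ler_pdivlMr //; nra.
by rewrite ger0_norm ?ln_ge0 ?ler1n // -(expRK (eps * n%:R)) ler_ln ?posrE ?ltr0n ?expR_gt0.
Qed.

End LittleO.

Unset Implicit Arguments.

Theorem lemma3p4 (R : realType) (s t : forall n : nat, {perm 'I_n}) :
  little_o_n (fun n => ((cycle_count (s n) 1 + cycle_count (t n) 1)%N)%:R : R) ->
  (exists delta : R, 0 < delta /\ exists N : nat, forall n : nat, (N <= n)%N ->
     ((total_cycles (s n) + total_cycles (t n))%N)%:R <= (1 - delta) * n%:R) ->
  exists eta : R, 0 < eta /\
    exists g : nat -> R, little_o_n g /\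
      forall n k : nat, (1 <= k)%N -> (k.*2 <= n)%N ->
        EN R (s n) (t n) k <= expR (- (eta * k%:R) + g n).
Proof.
move=> oF [d [d0 [N0 cycles_le]]]; exists d; split => //.
set F := fun n => ((cycle_count (s n) 1 + cycle_count (t n) 1)%N)%:R : R.
(* The cycle hypothesis only holds from N0 on; below N0 the trivial bound
   E N_k <= n is absorbed into g by its last summand. *)
exists (fun n => ln n.+1%:R + F n + (if (n < N0)%N then d * n%:R else 0)); split.
  apply: little_o_nD; first by apply: little_o_nD; [exact: little_o_n_ln | exact: oF].
  by apply: (@little_o_n_eventually0 _ _ N0) => n; rewrite ltnNge => ->.
move=> n k k1 kn; case: ltnP => [small_n | large_n].
  have dk : d * k%:R <= d * n%:R by rewrite ler_pM2l // ler_nat; lia.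
  have F0 : 0 <= F n by rewrite ler0n.
  apply: le_trans (EN_le_card _ _ _ _) _; rewrite card_ord.
  apply: le_trans (_ : n.+1%:R <= _); first by rewrite ler_nat.
  by rewrite -{1}(lnK (_ : n.+1%:R \in Num.pos)) ?posrE ?ltr0n // ler_expR; lra.
rewrite addr0; have := @EN_le_expR R _ (s n) (t n) k d k1.
by rewrite card_ord; apply => //; [exact: ltW | exact: cycles_le].
Qed.
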